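(* Consider the blown-up Brusselator problem described in the context, with fixed $a,d_1,d_2>0$ and $n\ge1$. Let $A(\bar{\mathbf x},\bar t)\in\mathbb C$ be smooth, $\boldsymbol\varphi=(1,-1+ia^{-1})^\top$, $\boldsymbol\varphi^*=\tfrac12(1-ia,-ia)^\top$, and $$\boldsymbol\psi^{(0)}=A(\bar{\mathbf x},\bar t)\boldsymbol\varphi e^{iat}+\overline{A}\,\overline{\boldsymbol\varphi}e^{-iat}.$$ Let $\boldsymbol\psi^{(1)}$ be any $2\pi/a$-periodic-in-$t$ solution of $$(\partial_t-M)\boldsymbol\psi^{(1)}=\Big(\tfrac{1+a^2}{a}(\psi_1^{(0)})^2+2a\psi_1^{(0)}\psi_2^{(0)}\Big)\begin{pmatrix}1\\-1\end{pmatrix},\qquad M=\begin{pmatrix}a^2&a^2\\-(1+a^2)&-a^2\end{pmatrix},$$ and let $\mathbf B^{(2)}$ be the order-$r^2$ term of the blown-up equation, $$\mathbf B^{(2)}=-(\partial_{\bar t}+r^{-1}\partial_{\bar t}r)\boldsymbol\psi^{(0)}+\mathrm{diag}(d_1,d_2)\Delta_{\bar{\mathbf x}}\boldsymbol\psi^{(0)}+\Big((1+a^2)\bar\mu\psi_1^{(0)}+\tfrac{2(1+a^2)}{a}\psi_1^{(0)}\psi_1^{(1)}+2a(\psi_1^{(0)}\psi_2^{(1)}+\psi_1^{(1)}\psi_2^{(0)})+(\psi_1^{(0)})^2\psi_2^{(0)}\Big)\begin{pmatrix}1\\-1\end{pmatrix}.$$ Writing $\mathbf B^{(2)}=\sum_{k\in\mathbb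 Z}\mathbf B^{(2,k)}(\bar{\mathbf x},\bar t)e^{ikat}$, the solvability condition $\boldsymbol\varphi^*\cdot\mathbf B^{(2,1)}\equiv0$ holds if and only if $$\partial_{\bar t}A=c_1\Delta_{\bar{\mathbf x}}A+\big(c_2\bar\mu(\bar t)-r(\bar t)^{-1}\partial_{\bar t}r(\bar t)\big)A-c_3A|A|^2,$$ where $\Delta_{\bar{\mathbf x}}=\sum_{j=1}^n\partial_{\bar x_j}^2$ and $$c_1=\frac{d_1+d_2-ia(d_1-d_2)}{2},\quad c_2=\frac{1+a^2}{2},\quad c_3=\frac12\Big(\frac{2+a^2}{a^2}+i\,\frac{4-7a^2+4a^4}{3a^3}\Big).$$ Consequently, in charts (with $\beta=2$): $\mathcal K_1:\ \partial_{t_1}A_1=c_1\Delta_{\mathbf x_1}A_1+(-c_2+\tfrac{\varepsilon_1(t_1)}{2})A_1-c_3A_1|A_1|^2$; $\mathcal K_2:\ \partial_{t_2}A_2=c_1\Delta_{\mathbf x_2}A_2+c_2\mu_2(t_2)A_2-c_3A_2|A_2|^2$; $\mathcal K_3:\ \partial_{t_3}A_3=c_1\Delta_{\mathbf x_3}A_3+(c_2-\tfrac{\varepsilon_3(t_3)}{2})A_3-c_3A_3|A_3|^2$, with $\varepsilon_1(t_1)=\frac{2\varepsilon_1(0)}{2-4\varepsilon_1(0)t_1}$, $\mu_2(t_2)=\mu_2(0)+t_2$, $\varepsilon_3(t_3)=\frac{2\varepsilon_3(0)}{2+4\varepsilon_3(0)t_3}$.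
   Context: The dynamic Brusselator system, after translating its homogeneous steady state to the origin and setting $\mu=(b-b_c)/b_c$, $b_c=1+a^2$, is, for $\mathbf x\in\mathbb R^n$, $\partial_tu=d_1\Delta u+a^2u+a^2v+(1+a^2)u\mu+f$, $\partial_tv=d_2\Delta v-(1+a^2)u-a^2v-(1+a^2)u\mu-f-\varepsilon(1+a^2)/a$, $\dot\mu=\varepsilon$, where $f(u,v,\mu)=\frac{(1+a^2)(1+\mu)}{a}u^2+2auv+u^2v$. The blow-up (with $\beta=2$) is $(u,v)=r(\bar t)\boldsymbol\psi(t,\bar{\mathbf x},\bar t)$, $\mu=r^2\bar\mu$, $\varepsilon=r^4\bar\varepsilon$, $(\bar\mu,\bar\varepsilon)\in S^1$, with $\partial_{x_j}=r\partial_{\bar x_j}$ (the solution does not depend on the fast space variable) and $\partial_t\mapsto\partial_t+r^2\partial_{\bar t}$ (fast $t$ and slow $\bar t$ independent); $r(\bar t)>0$, $\bar\mu(\bar t)$ given, $r^{-1}\partial_{\bar t}r$ treated as order one. Expanding $\boldsymbol\psi=\sum_k\boldsymbol\psi^{(k)}r^k$ and matching powers of $r$ gives the order-$r^0$ equation $(\partial_t-M)\boldsymbol\psi^{(0)}=0$, the order-$r^1$ equation above, and $\mathbf B^{(2)}$ as the order-$r^2$ forcing. Charts: $\mathcal K_1$: $\bar\mu=-1$, $r=r_1$, $\varepsilon=r_1^4\varepsilon_1$, $\dot r_1=-\tfrac12r_1\varepsilon_1$, $\dot\varepsilon_1=2\varepsilon_1^2$; $\mathcal K_2$: $\bar\varepsilon=1$,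 $\mu=r_2^2\mu_2$, $\dot r_2=0$, $\dot\mu_2=1$; $\mathcal K_3$: $\bar\mu=1$, $\varepsilon=r_3^4\varepsilon_3$, $\dot r_3=\tfrac12r_3\varepsilon_3$, $\dot\varepsilon_3=-2\varepsilon_3^2$; $t_l,\mathbf x_l,A_l$ denote time, space and amplitude in chart $\mathcal K_l$, and $\Delta_{\mathbf x_l}$ the Laplacian in $\mathbf x_l$. *)

From mathcomp Require Import ssreflect ssrfun ssrbool eqtype ssrnat fintype bigop.
From Stdlib Require Import Reals.
From Coquelicot Require Import Coquelicot.

Set Implicit Arguments.
Unset Strict Implicit.

Local Open Scope R_scope.

Definition Pt (n : nat) := 'I_n -> R.

Definition upd (n : nat) (x : Pt n) (j : 'I_n) (s : R) : Pt n :=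
  fun k => if k == j then s else x k.

Inductive dir (n : nat) : Type :=
| Dx : 'I_n -> dir n
| Dt : dir n.
Arguments Dt {n}.

Definition pdR (n : nat) (d : dir n) (G : Pt n -> R -> R) : Pt n -> R -> R :=
  fun x tb => match d with
              | Dx j => Derive (fun s => G (upd x j s) tb) (x j)
              | Dt => Derive (fun s => G x s) tb
              end.

Definition exR (n : nat) (d : dir n) (G : Pt n -> R -> R) (x : Pt n) (tb : R) : Prop :=
  match d with
  | Dx j => ex_derive (fun s => G (upd x j s) tb) (x j)
  | Dt => ex_derive (fun s => G x s) tb
  end.

Fixpoint pdlR (n : nat) (l : list (dir n)) (G : Pt n -> R -> R) : Pt n -> R -> R :=
  match l with
  | nil => G
  | cons d l' => pdR d (pdlR l' G)
  end.

Definition smoothR (n : nat) (G : Pt n -> R -> R) : Prop :=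
  forall (l : list (dir n)) (d : dir n) (x : Pt n) (tb : R), exR d (pdlR l G) x tb.

Definition lapR (n : nat) (G : Pt n -> R -> R) : Pt n -> R -> R :=
  fun x tb => \big[Rplus/0]_(j < n) pdR (Dx j) (pdR (Dx j) G) x tb.

Definition ReF (n : nat) (A : Pt n -> R -> C) : Pt n -> R -> R := fun x tb => fst (A x tb).
Definition ImF (n : nat) (A : Pt n -> R -> C) : Pt n -> R -> R := fun x tb => snd (A x tb).

Definition smoothC (n : nat) (A : Pt n -> R -> C) : Prop :=
  smoothR (ReF A) /\ smoothR (ImF A).

Definition dtC (n : nat) (A : Pt n -> R -> C) (x : Pt n) (tb : R) : C :=
  (pdR Dt (ReF A) x tb, pdR Dt (ImF A) x tb).

Definition lapC (n : nat) (A : Pt n -> R -> C) (x : Pt n) (tb : R) : C :=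
  (lapR (ReF A) x tb, lapR (ImF A) x tb).

Definition expi (th : R) : C := (cos th, sin th).

(* phi = (1, -1 + i a^{-1}),  phi* = 1/2 (1 - i a, - i a) ; index true = 1st, false = 2nd *)
Definition phi (a : R) (k : bool) : C := if k then (1, 0) else (-1, / a).
Definition phistar (a : R) (k : bool) : C := if k then (/2, - a / 2) else (0, - a / 2).

(* psi^(0)_k(t, xbar, tbar) = A phi_k e^{iat} + conj(A) conj(phi_k) e^{-iat}  (a complex
   number with zero imaginary part; we take its real part, psi is real-valued) *)
Definition psi0c (n : nat) (a : R) (A : Pt n -> R -> C) (k : bool) (t : R) (x : Pt n) (tb : R) : C :=
  Cplus (Cmult (Cmult (A x tb) (phi a k)) (expi (a * t)))
        (Cmult (Cmult (Cconj (A x tb)) (Cconj (phi a k))) (Cconj (expi (a * t)))).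

Definition psi0 (n : nat) (a : R) (A : Pt n -> R -> C) (k : bool) (t : R) : Pt n -> R -> R :=
  fun x tb => fst (psi0c a A k t x tb).

Definition sgn (k : bool) : R := if k then 1 else -1.

Definition forcing1 (n : nat) (a : R) (A : Pt n -> R -> C) (t : R) (x : Pt n) (tb : R) : R :=
  (1 + a ^ 2) / a * (psi0 a A true t x tb) ^ 2
  + 2 * a * psi0 a A true t x tb * psi0 a A false t x tb.

(* psi1 : t -> xbar -> tbar -> (psi1_1, psi1_2) is a 2 pi / a periodic-in-t solution of
   (d_t - M) psi1 = forcing1 * (1, -1),   M = [[a^2, a^2], [-(1+a^2), -a^2]] *)
Definition psi1_solution (n : nat) (a : R) (A : Pt n -> R -> C)
    (psi1 : R -> Pt n -> R -> R * R) : Prop :=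
  (forall t x tb, psi1 (t + 2 * PI / a) x tb = psi1 t x tb) /\
  (forall t x tb,
      ex_derive (fun s => fst (psi1 s x tb)) t /\
      ex_derive (fun s => snd (psi1 s x tb)) t /\
      Derive (fun s => fst (psi1 s x tb)) t
        - (a ^ 2 * fst (psi1 t x tb) + a ^ 2 * snd (psi1 t x tb))
        = forcing1 a A t x tb /\
      Derive (fun s => snd (psi1 s x tb)) t
        - (- (1 + a ^ 2) * fst (psi1 t x tb) - a ^ 2 * snd (psi1 t x tb))
        = - forcing1 a A t x tb).

Definition psi1c (n : nat) (psi1 : R -> Pt n -> R -> R * R) (k : bool) (t : R) (x : Pt n) (tb : R) : R :=
  if k then fst (psi1 t x tb) else snd (psi1 t x tb).

Definition B2 (n : nat) (a d1 d2 : R) (r mu : R -> R) (A : Pt n -> R -> C)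
    (psi1 : R -> Pt n -> R -> R * R) (k : bool) (t : R) (x : Pt n) (tb : R) : R :=
  let p01 := psi0 a A true t x tb in
  let p02 := psi0 a A false t x tb in
  let p11 := psi1c psi1 true t x tb in
  let p12 := psi1c psi1 false t x tb in
  - (pdR Dt (psi0 a A k t) x tb + / r tb * Derive r tb * psi0 a A k t x tb)
  + (if k then d1 else d2) * lapR (psi0 a A k t) x tb
  + sgn k * ((1 + a ^ 2) * mu tb * p01
             + 2 * (1 + a ^ 2) / a * p01 * p11
             + 2 * a * (p01 * p12 + p11 * p02)
             + p01 ^ 2 * p02).

Definition fourier1 (a : R) (f : R -> R) : C :=
  (a / (2 * PI) * RInt (fun t => f t * cos (a * t)) 0 (2 * PI / a),
   - (a / (2 * PI) * RInt (fun t => f t * sin (a * t)) 0 (2 * PI / a))).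

Definition B21 (n : nat) (a d1 d2 : R) (r mu : R -> R) (A : Pt n -> R -> C)
    (psi1 : R -> Pt n -> R -> R * R) (k : bool) (x : Pt n) (tb : R) : C :=
  fourier1 a (fun t => B2 a d1 d2 r mu A psi1 k t x tb).

Definition solvability (n : nat) (a d1 d2 : R) (r mu : R -> R) (A : Pt n -> R -> C)
    (psi1 : R -> Pt n -> R -> R * R) (x : Pt n) (tb : R) : Prop :=
  Cplus (Cmult (phistar a true) (B21 a d1 d2 r mu A psi1 true x tb))
        (Cmult (phistar a false) (B21 a d1 d2 r mu A psi1 false x tb)) = RtoC 0.

Definition c1 (a d1 d2 : R) : C := ((d1 + d2) / 2, - a * (d1 - d2) / 2).
Definition c2 (a : R) : R := (1 + a ^ 2) / 2.
Definition c3 (a : R) : C :=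
  ((2 + a ^ 2) / a ^ 2 / 2, (4 - 7 * a ^ 2 + 4 * a ^ 4) / (3 * a ^ 3) / 2).

Definition GL_eq (n : nat) (a d1 d2 : R) (g : R -> C) (A : Pt n -> R -> C) (x : Pt n) (tb : R) : Prop :=
  dtC A x tb =
  Cminus (Cplus (Cmult (c1 a d1 d2) (lapC A x tb)) (Cmult (g tb) (A x tb)))
         (Cmult (Cmult (c3 a) (A x tb)) (RtoC (Cmod (A x tb) ^ 2))).

(* At a fixed point (xbar, tbar) every ingredient of B^(2) except psi^(1) is a trigonometric
   polynomial in the fast time t, of period 2 pi / a.  Writing [harm a k z t] for
   2 Re (z e^{ikat}), a product of two harmonics is again a sum of two harmonics ([harm_mul]),
   so first Fourier coefficients of polynomials in psi^(0) follow from orthogonality over one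
   period.  The corrector psi^(1) is never solved for: the first Fourier coefficient of
   [harm a 1 w * psi^(1)] only involves the mean Y0 and the second mode Y2 of psi^(1), and
   integrating the periodic equation (d_t - M) psi^(1) = F (1, -1) by parts against 1 and
   e^{-2iat} gives M Y0 = - F0 (1, -1) and (2ia - M) Y2 = F2 (1, -1), which determine both.
   Contracting with phi* (phi*.phi = 1, phi*.diag(d1, d2) phi = c1, phi*.(1, -1) = 1/2) turns
   the solvability condition into the Ginzburg-Landau equation; the chart equations are its
   specialisations. *)

From Pilot Require Import Defs.
From mathcomp Require Import ssreflect ssrfun ssrbool eqtype ssrnat fintype bigop.
From Stdlib Require Import Reals Lra Lia ZArith FunctionalExtensionality.
From Coquelicot Require Import Coquelicot.
Local Open Scope R_scope.

Definition avg (a : R) (f : R -> R) : R := a / (2 * PI) * RInt f 0 (2 * PI / a).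

(* [harm a k z t] is 2 Re (z e^{ikat}) = z e^{ikat} + conj z e^{-ikat}. *)
Definition harm (a : R) (k : Z) (z : C) (t : R) : R :=
  2 * (fst z * cos (IZR k * a * t) - snd z * sin (IZR k * a * t)).

Definition coef (a : R) (k : Z) (f : R -> R) : C :=
  (avg a (fun t => f t * cos (IZR k * a * t)), - avg a (fun t => f t * sin (IZR k * a * t))).

Lemma harm_continuous (a : R) (k : Z) (z : C) t : continuous (harm a k z) t.
Proof. by apply: ex_derive_continuous; rewrite /harm; auto_derive. Qed.

Lemma continuous_Rmult (f g : R -> R) t :
  continuous f t -> continuous g t -> continuous (fun s => f s * g s) t.
Proof. exact: continuous_mult. Qed.

Lemma continuous_Rplus (f g : R -> R) t :
  continuous f t -> continuous g t -> continuous (fun s => f s + g s) t.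
Proof. exact: continuous_plus. Qed.

Lemma continuous_Rminus (f g : R -> R) t :
  continuous f t -> continuous g t -> continuous (fun s => f s - g s) t.
Proof. exact: continuous_minus. Qed.

Lemma continuous_cos_freq (w t : R) : continuous (fun s => cos (w * s)) t.
Proof. by apply: ex_derive_continuous; auto_derive. Qed.

Lemma continuous_sin_freq (w t : R) : continuous (fun s => sin (w * s)) t.
Proof. by apply: ex_derive_continuous; auto_derive. Qed.

#[local] Hint Resolve harm_continuous continuous_cos_freq continuous_sin_freq : continuity.

(* Leaves are tried first and [continuous_Rminus] before [continuous_Rplus]: otherwise
   unification unfolds [harm] and [x - y] into shapes the leaves no longer match. *)
Ltac solve_continuous :=
  lazymatch goal with
  | |- forall t, continuous _ t => intro; solve_continuous
  | |- continuous _ _ =>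
      repeat first
        [ solve [auto with continuity] | apply: continuous_const | apply: continuous_Rminus
        | apply: continuous_Rplus | apply: continuous_Rmult ]
  end.

Section Averages.

Variable a : R.
Hypothesis a_gt0 : 0 < a.

Lemma ex_RInt_period (f : R -> R) : (forall t, continuous f t) -> ex_RInt f 0 (2 * PI / a).
Proof. by move=> Cf; apply: ex_RInt_continuous => t _. Qed.

Lemma avg_ext (f g : R -> R) : (forall t, f t = g t) -> avg a f = avg a g.
Proof. by move=> E; rewrite /avg (RInt_ext f g) // => t _. Qed.

Lemma avg_plus (f g : R -> R) : (forall t, continuous f t) -> (forall t, continuous g t) ->
  avg a (fun t => f t + g t) = avg a f + avg a g.
Proof.
by move=> Cf Cg; rewrite /avg (RInt_plus f g) /plus /=; [ring | exact: ex_RInt_period ..].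
Qed.

Lemma avg_scal (k : R) (f : R -> R) : (forall t, continuous f t) ->
  avg a (fun t => k * f t) = k * avg a f.
Proof.
by move=> Cf; rewrite /avg (RInt_scal f) /scal /= /mult /=; [ring | exact: ex_RInt_period].
Qed.

Lemma avg_const (k : R) : avg a (fun=> k) = k.
Proof. have := PI_RGT_0; rewrite /avg RInt_const /scal /= /mult /= => PI_gt0; field; lra. Qed.

Lemma avg_derive_periodic (F f : R -> R) :
  (forall t, is_derive F t (f t)) -> (forall t, continuous f t) ->
  F (2 * PI / a) = F 0 -> avg a f = 0.
Proof.
move=> DF Cf PF.
rewrite /avg (is_RInt_unique f 0 (2 * PI / a) (minus (F (2 * PI / a)) (F 0))).
- by rewrite PF /minus plus_opp_r Rmult_0_r.
- by apply: is_RInt_derive => t _.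
Qed.

Lemma harm_periodic (k : Z) :
  cos (IZR k * a * (2 * PI / a)) = 1 /\ sin (IZR k * a * (2 * PI / a)) = 0.
Proof.
have -> : IZR k * a * (2 * PI / a) = 2 * (IZR k * PI) by field; lra.
have S : sin (IZR k * PI) = 0 by apply: sin_eq_0_1; exists k.
by rewrite cos_2a_sin sin_2a S; split; ring.
Qed.

Lemma avg_harm (k : Z) (z : C) : k <> 0%Z -> avg a (harm a k z) = 0.
Proof.
move=> /not_0_IZR k0.
apply: (avg_derive_periodic
          (fun t => 2 * (fst z * sin (IZR k * a * t) + snd z * cos (IZR k * a * t)) / (IZR k * a))).
- by move=> t; auto_derive; [|rewrite /harm; field; split; [lra|]].
- exact: harm_continuous.
- by case: (harm_periodic k) => -> ->; rewrite !Rmult_0_r sin_0 cos_0 Rmult_0_r.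
Qed.

Lemma harm_0 (z : C) t : harm a 0 z t = 2 * fst z.
Proof. by rewrite /harm !Rmult_0_l cos_0 sin_0; ring. Qed.

Lemma harm_mul (j k : Z) (z w : C) t :
  harm a j z t * harm a k w t = harm a (j + k) (z * w)%C t + harm a (j - k) (z * Cconj w)%C t.
Proof.
rewrite /harm.
have -> : IZR (j + k) * a * t = IZR j * a * t + IZR k * a * t by rewrite plus_IZR; ring.
have -> : IZR (j - k) * a * t = IZR j * a * t - IZR k * a * t by rewrite minus_IZR; ring.
rewrite cos_plus sin_plus cos_minus sin_minus.
by case: z => p q; case: w => p' q'; rewrite /Cmult /Cconj /=; ring.
Qed.

Lemma harm_opp (k : Z) (z : C) t : harm a (- k) z t = harm a k (Cconj z) t.
Proof. by rewrite /harm opp_IZR !Ropp_mult_distr_l_reverse cos_neg sin_neg /Cconj /=; ring. Qed.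

Lemma harm_plus (k : Z) (z w : C) t : harm a k (z + w)%C t = harm a k z t + harm a k w t.
Proof. by rewrite /harm /Cplus /=; ring. Qed.

Lemma cos_harm (k : Z) t : cos (IZR k * a * t) = harm a k (/ 2, 0) t.
Proof. by rewrite /harm /=; field. Qed.

Lemma sin_harm (k : Z) t : sin (IZR k * a * t) = harm a k (0, - / 2) t.
Proof. by rewrite /harm /=; field. Qed.

Lemma avg_harm_0 (z : C) : avg a (harm a 0 z) = 2 * fst z.
Proof. by rewrite (avg_ext _ (fun=> 2 * fst z)) ?avg_const // => t; rewrite harm_0. Qed.

Lemma avg_harm_mul_harm (j k : Z) (z w : C) : (j + k <> 0)%Z ->
  avg a (fun t => harm a j z t * harm a k w t) =
  if Z.eq_dec j k then 2 * fst (z * Cconj w)%C else 0.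
Proof.
move=> jk0; rewrite (avg_ext _ _ (harm_mul j k z w)) avg_plus; try solve_continuous.
rewrite avg_harm //; case: Z.eq_dec => jk /=.
- by rewrite jk Z.sub_diag avg_harm_0 Rplus_0_l.
- by rewrite avg_harm ?Rplus_0_r //; lia.
Qed.

Lemma coef_ext (k : Z) (f g : R -> R) : (forall t, f t = g t) -> coef a k f = coef a k g.
Proof. by move=> E; rewrite /coef !(avg_ext _ _ (fun t => f_equal (fun x => x * _) (E t))). Qed.

Lemma coef_as_avg (k : Z) (f : R -> R) :
  coef a k f = (avg a (fun t => f t * harm a k (/ 2, 0) t),
                - avg a (fun t => f t * harm a k (0, - / 2) t)).
Proof.
rewrite /coef (avg_ext (fun t => _ * cos _) (fun t => f t * harm a k (/ 2, 0) t)).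
- by rewrite (avg_ext (fun t => _ * sin _) (fun t => f t * harm a k (0, - / 2) t)) // => t;
     rewrite -sin_harm.
- by move=> t; rewrite -cos_harm.
Qed.

Lemma coef_harm_same (k : Z) (z : C) : (0 < k)%Z -> coef a k (harm a k z) = z.
Proof.
move=> k0; rewrite coef_as_avg !avg_harm_mul_harm; try lia.
by case: (Z.eq_dec k k) => [_|//] /=; case: z => p q /=; f_equal; field.
Qed.

Lemma coef_harm_other (j k : Z) (z : C) :
  (0 <= j)%Z -> (0 < k)%Z -> j <> k -> coef a k (harm a j z) = 0.
Proof.
move=> j0 k0 jk; rewrite coef_as_avg !avg_harm_mul_harm; try lia.
by case: (Z.eq_dec j k) => [//|_] /=; rewrite Ropp_0.
Qed.

Lemma coef_plus (k : Z) (f g : R -> R) : (forall t, continuous f t) -> (forall t, continuous g t) ->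
  coef a k (fun t => f t + g t) = (coef a k f + coef a k g)%C.
Proof.
move=> Cf Cg; rewrite !coef_as_avg.
rewrite (avg_ext _ (fun t => f t * harm a k (/ 2, 0) t + g t * harm a k (/ 2, 0) t));
  last by move=> t; ring.
rewrite (avg_ext (fun t => _ * harm a k (0, - / 2) t)
                 (fun t => f t * harm a k (0, - / 2) t + g t * harm a k (0, - / 2) t));
  last by move=> t; ring.
by rewrite !avg_plus /Cplus /=; [f_equal; ring | solve_continuous ..].
Qed.

Lemma coef_scal (k : Z) (r : R) (f : R -> R) : (forall t, continuous f t) ->
  coef a k (fun t => r * f t) = (RtoC r * coef a k f)%C.
Proof.
move=> Cf; rewrite !coef_as_avg.
rewrite (avg_ext _ (fun t => r * (f t * harm a k (/ 2, 0) t))); last by move=> t; ring.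
rewrite (avg_ext (fun t => _ * harm a k (0, - / 2) t) (fun t => r * (f t * harm a k (0, - / 2) t)));
  last by move=> t; ring.
by rewrite !avg_scal /Cmult /RtoC /=; [f_equal; ring | solve_continuous ..].
Qed.

Lemma coef1_harm_add (w : C) (c : R) (g : R -> R) : (forall t, continuous g t) ->
  coef a 1 (fun t => harm a 1 w t + c * g t) = (w + RtoC c * coef a 1 g)%C.
Proof.
move=> Cg; rewrite (coef_plus 1 (harm a 1 w) (fun t => c * g t)); try solve_continuous.
by rewrite coef_harm_same // coef_scal.
Qed.

Lemma avg_mul_harm (k : Z) (z : C) (f : R -> R) : (forall t, continuous f t) ->
  avg a (fun t => f t * harm a k z t) = 2 * (fst z * fst (coef a k f) + snd z * snd (coef a k f)).
Proof.
move=> Cf; rewrite (avg_ext _ (fun t => (2 * fst z) * (f t * cos (IZR k * a * t))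
                                        + (- 2 * snd z) * (f t * sin (IZR k * a * t))));
  last by move=> t; rewrite /harm; ring.
by rewrite avg_plus ?avg_scal /coef /=; [ring | solve_continuous ..].
Qed.

Lemma harm_mul_cos (w : C) t :
  harm a 1 w t * harm a 1 (/ 2, 0) t = harm a 2 (Cmult w (/ 2, 0)) t + fst w.
Proof. by rewrite harm_mul harm_0 /Cmult /Cconj /=; field. Qed.

Lemma harm_mul_sin (w : C) t :
  harm a 1 w t * harm a 1 (0, - / 2) t = harm a 2 (Cmult w (0, - / 2)) t - snd w.
Proof. by rewrite harm_mul harm_0 /Cmult /Cconj /=; field. Qed.

Lemma coef_harm_mul (w : C) (y : R -> R) : (forall t, continuous y t) ->
  coef a 1 (fun t => harm a 1 w t * y t) = (w * RtoC (avg a y) + Cconj w * coef a 2 y)%C.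
Proof.
move=> Cy; rewrite coef_as_avg.
rewrite (avg_ext _ (fun t => y t * harm a 2 (Cmult w (/ 2, 0)) t + fst w * y t));
  last by move=> t; rewrite (Rmult_comm (harm a _ _ _)) Rmult_assoc harm_mul_cos; ring.
rewrite (avg_ext (fun t => _ * harm a 1 (0, - / 2) t)
                 (fun t => y t * harm a 2 (Cmult w (0, - / 2)) t + (- snd w) * y t));
  last by move=> t; rewrite (Rmult_comm (harm a _ _ _)) Rmult_assoc harm_mul_sin; ring.
rewrite !avg_plus ?avg_scal ?avg_mul_harm; try solve_continuous.
by case: w => p q; rewrite /Cplus /Cmult /Cconj /RtoC /=; f_equal; field.
Qed.

Lemma harm_cube (w1 w2 w3 : C) t :
  harm a 1 w1 t * harm a 1 w2 t * harm a 1 w3 t =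
  harm a 3 (w1 * w2 * w3)%C t
  + harm a 1 (w1 * w2 * Cconj w3 + w1 * Cconj w2 * w3 + Cconj w1 * w2 * w3)%C t.
Proof.
rewrite harm_mul Rmult_plus_distr_r !harm_mul /= (harm_opp 1) !harm_plus.
have -> : Cconj (w1 * Cconj w2 * Cconj w3)%C = (Cconj w1 * w2 * w3)%C.
{ by case: w1 => ? ?; case: w2 => ? ?; case: w3 => ? ?; rewrite /Cconj /Cmult /=; f_equal; ring. }
ring.
Qed.

Lemma coef_harm_cube (w1 w2 w3 : C) :
  coef a 1 (fun t => harm a 1 w1 t * harm a 1 w2 t * harm a 1 w3 t) =
  (w1 * w2 * Cconj w3 + w1 * Cconj w2 * w3 + Cconj w1 * w2 * w3)%C.
Proof.
rewrite (coef_ext _ _ _ (harm_cube w1 w2 w3)) coef_plus; try solve_continuous.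
by rewrite coef_harm_other ?coef_harm_same // Cplus_0_l.
Qed.

Lemma avg_harm_mul (z w : C) :
  avg a (fun t => harm a 1 z t * harm a 1 w t) = 2 * fst (z * Cconj w)%C.
Proof. by rewrite avg_harm_mul_harm //; case: (Z.eq_dec 1 1). Qed.

Lemma coef2_harm_mul (z w : C) : coef a 2 (fun t => harm a 1 z t * harm a 1 w t) = (z * w)%C.
Proof.
rewrite (coef_ext _ _ _ (harm_mul 1 1 z w)) coef_plus; try solve_continuous.
by rewrite coef_harm_same // (coef_harm_other 0) // Cplus_0_r.
Qed.

Lemma coef_derive_periodic (k : Z) (y dy : R -> R) :
  (forall t, is_derive y t (dy t)) -> (forall t, continuous dy t) -> y (2 * PI / a) = y 0 ->
  coef a k dy = Cmult (0, IZR k * a) (coef a k y).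
Proof.
move=> Dy Cdy Py.
have Cy t : continuous y t by apply: ex_derive_continuous; exists (dy t).
set w := IZR k * a.
have Ic : avg a (fun t => dy t * cos (w * t) + (- w) * (y t * sin (w * t))) = 0.
{ apply: (avg_derive_periodic (fun t => y t * cos (w * t))); try solve_continuous.
  - move=> t; auto_derive; first by exists (dy t).
    by rewrite (is_derive_unique _ _ _ (Dy t)); ring.
  - by rewrite Py; case: (harm_periodic k) => -> _; rewrite Rmult_0_r cos_0. }
have Is : avg a (fun t => dy t * sin (w * t) + w * (y t * cos (w * t))) = 0.
{ apply: (avg_derive_periodic (fun t => y t * sin (w * t))); try solve_continuous.
  - move=> t; auto_derive; first by exists (dy t).
    by rewrite (is_derive_unique _ _ _ (Dy t)); ring.
  - by rewrite Py; case: (harm_periodic k) => _ ->; rewrite !Rmult_0_r sin_0 Rmult_0_r. }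
rewrite !avg_plus ?avg_scal in Ic Is; try solve_continuous.
by rewrite /coef /Cmult -/w /=; f_equal; lra.
Qed.

Section ForcedOscillator.

Variables F y1 y2 : R -> R.
Hypothesis F_continuous : forall t, continuous F t.
Hypothesis y1_derive : forall t, is_derive y1 t (a ^ 2 * y1 t + a ^ 2 * y2 t + F t).
Hypothesis y2_derive : forall t, is_derive y2 t (- (1 + a ^ 2) * y1 t - a ^ 2 * y2 t - F t).
Hypothesis y1_periodic : y1 (2 * PI / a) = y1 0.
Hypothesis y2_periodic : y2 (2 * PI / a) = y2 0.

Let y1_continuous t : continuous y1 t.
Proof. by apply: ex_derive_continuous; eexists; apply: y1_derive. Qed.
Let y2_continuous t : continuous y2 t.
Proof. by apply: ex_derive_continuous; eexists; apply: y2_derive. Qed.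
#[local] Hint Resolve y1_continuous y2_continuous F_continuous : continuity.

Lemma avg_forced_solution : avg a y1 = 0 /\ avg a y2 = - avg a F / a ^ 2.
Proof.
have E1 := avg_derive_periodic _ _ y1_derive ltac:(solve_continuous) y1_periodic.
have E2 : avg a (fun t => - (1 + a ^ 2) * y1 t + (- a ^ 2) * y2 t + (- 1) * F t) = 0.
{ rewrite (avg_ext _ (fun t => - (1 + a ^ 2) * y1 t - a ^ 2 * y2 t - F t)); last by move=> t; ring.
  by apply: (avg_derive_periodic _ _ y2_derive); try solve_continuous. }
rewrite !avg_plus ?avg_scal in E1 E2; try solve_continuous.
have Y1 : avg a y1 = 0 by lra.
by split; last (rewrite Y1 in E1; field_simplify_eq; lra).
Qed.

(* The second modes solve (2ia - M) Y2 = F2 (1, -1), with det (2ia - M) = -3 a^2. *)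
Lemma coef2_forced_solution :
  coef a 2 y1 = Cmult (0, - 2 / (3 * a)) (coef a 2 F) /\
  coef a 2 y2 = Cmult (/ (3 * a ^ 2), 2 / (3 * a)) (coef a 2 F).
Proof.
have E1 := coef_derive_periodic 2 _ _ y1_derive ltac:(solve_continuous) y1_periodic.
have E2 := coef_derive_periodic 2 _ _ y2_derive ltac:(solve_continuous) y2_periodic.
rewrite (coef_ext _ _ (fun t => a ^ 2 * y1 t + a ^ 2 * y2 t + 1 * F t)) in E1;
  last by move=> t; ring.
rewrite (coef_ext _ _ (fun t => - (1 + a ^ 2) * y1 t + (- a ^ 2) * y2 t + (- 1) * F t)) in E2;
  last by move=> t; ring.
rewrite !coef_plus ?coef_scal in E1 E2; try solve_continuous.
move: E1 E2; case: (coef a 2 y1) => p1 q1; case: (coef a 2 y2) => p2 q2; case: (coef a 2 F) => g h.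
rewrite /Cplus /Cmult /RtoC /= => [[E1 E2] [E3 E4]].
have S1 : p1 = 2 * a * (q1 + q2) by lra.
have S2 : q1 = - (2 * a * (p1 + p2)) by lra.
have Q : q1 + q2 = h / (3 * a ^ 2) by rewrite S1 in E2; field_simplify_eq; lra.
have P : p1 + p2 = g / (3 * a ^ 2) by rewrite S2 in E1; field_simplify_eq; lra.
rewrite Q in S1; rewrite P in S2.
have -> : p2 = (p1 + p2) - p1 by ring.
have -> : q2 = (q1 + q2) - q1 by ring.
by rewrite P Q S1 S2; split; f_equal; field; lra.
Qed.

End ForcedOscillator.

End Averages.

Lemma Cminus_eq_0 (z w : C) : Cminus z w = RtoC 0 <-> w = z.
Proof.
case: z w => [p q] [p' q']; rewrite /Cminus /Cplus /Copp /RtoC /=.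
by split=> [[E1 E2] | [-> ->]]; f_equal; lra.
Qed.

Lemma fourier1_coef a f : fourier1 a f = coef a 1 f.
Proof. by rewrite /fourier1 /coef /avg Rmult_1_l. Qed.

Lemma harm_Cmult (a : R) (k : Z) (z w : C) t :
  harm a k (z * w)%C t = fst z * harm a k w t + snd z * harm a k (Ci * w)%C t.
Proof. by case: z => ? ?; case: w => ? ?; rewrite /harm /Cmult /Ci /=; ring. Qed.

Lemma pdR_lin n (d : dir n) (U V : Pt n -> R -> R) k1 k2 x tb :
  exR d U x tb -> exR d V x tb ->
  pdR d (fun x tb => k1 * U x tb + k2 * V x tb) x tb = k1 * pdR d U x tb + k2 * pdR d V x tb.
Proof.
by case: d => [j|] /= HU HV; rewrite Derive_plus ?Derive_scal //; apply: ex_derive_scal.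
Qed.

Lemma big_Rplus_lin n (F G : 'I_n -> R) k1 k2 :
  \big[Rplus/0]_(j < n) (k1 * F j + k2 * G j) =
  k1 * \big[Rplus/0]_(j < n) F j + k2 * \big[Rplus/0]_(j < n) G j.
Proof.
apply: (big_rec3 (fun x y z => x = k1 * y + k2 * z)); first by ring.
by move=> i y1 y2 y3 _ ->; ring.
Qed.

Lemma lapR_lin n (U V : Pt n -> R -> R) k1 k2 x tb : smoothR U -> smoothR V ->
  lapR (fun x tb => k1 * U x tb + k2 * V x tb) x tb = k1 * lapR U x tb + k2 * lapR V x tb.
Proof.
move=> SU SV; rewrite /lapR -big_Rplus_lin; apply: eq_bigr => j _.
have -> : pdR (Defs.Dx j) (fun x tb => k1 * U x tb + k2 * V x tb) =
          (fun x tb => k1 * pdR (Defs.Dx j) U x tb + k2 * pdR (Defs.Dx j) V x tb).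
{ do 2 (apply: functional_extensionality => ?).
  by apply: pdR_lin; [apply: (SU nil) | apply: (SV nil)]. }
by apply: pdR_lin; [apply: (SU (cons (Defs.Dx j) nil)) | apply: (SV (cons (Defs.Dx j) nil))].
Qed.

Lemma psi0_harm n a (A : Pt n -> R -> C) k t x tb :
  psi0 a A k t x tb = harm a 1 (A x tb * phi a k)%C t.
Proof.
rewrite /psi0 /psi0c /harm /expi Rmult_1_l.
by case: (A x tb) => ? ?; case: (phi a k) => ? ?; rewrite /Cplus /Cmult /Cconj /=; ring.
Qed.

Lemma psi0_ReF_ImF n a (A : Pt n -> R -> C) k t :
  psi0 a A k t =
  fun x tb => harm a 1 (phi a k) t * ReF A x tb + harm a 1 (Ci * phi a k)%C t * ImF A x tb.
Proof.
do 2 (apply: functional_extensionality => ?).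
by rewrite psi0_harm harm_Cmult /ReF /ImF; ring.
Qed.

Lemma pdR_psi0 n a (A : Pt n -> R -> C) k t x tb : smoothC A ->
  pdR Dt (psi0 a A k t) x tb = harm a 1 (dtC A x tb * phi a k)%C t.
Proof.
case=> SU SV; rewrite psi0_ReF_ImF pdR_lin; [|exact (SU nil Dt x tb)|exact (SV nil Dt x tb)].
by rewrite (harm_Cmult a 1 (dtC A x tb)) /dtC /=; ring.
Qed.

Lemma lapR_psi0 n a (A : Pt n -> R -> C) k t x tb : smoothC A ->
  lapR (psi0 a A k t) x tb = harm a 1 (lapC A x tb * phi a k)%C t.
Proof.
by case=> SU SV; rewrite psi0_ReF_ImF lapR_lin // (harm_Cmult a 1 (lapC A x tb)) /lapC /=; ring.
Qed.

Definition B2_nonlinear (a P1 P2 Y1 Y2 : R) : R :=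
  2 * (1 + a ^ 2) / a * P1 * Y1 + 2 * a * (P1 * Y2 + Y1 * P2) + P1 * P1 * P2.

Lemma B2_harm n a d1 d2 r mu (A : Pt n -> R -> C) psi1 k t x tb : smoothC A ->
  B2 a d1 d2 r mu A psi1 k t x tb =
  harm a 1 ((- dtC A x tb - RtoC (/ r tb * Derive r tb) * A x tb
             + RtoC (if k then d1 else d2) * lapC A x tb) * phi a k
            + RtoC (sgn k * (1 + a ^ 2) * mu tb) * A x tb)%C t
  + sgn k * B2_nonlinear a (harm a 1 (A x tb * phi a true)%C t)
                           (harm a 1 (A x tb * phi a false)%C t)
                           (fst (psi1 t x tb)) (snd (psi1 t x tb)).
Proof.
move=> SA; rewrite /B2 pdR_psi0 // lapR_psi0 // !psi0_harm /psi1c /B2_nonlinear.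
case: (A x tb) => u v; case: (dtC A x tb) => ? ?; case: (lapC A x tb) => ? ?.
by case: k; rewrite /harm /phi /sgn /Cplus /Cmult /Copp /RtoC /=; ring.
Qed.

Lemma forcing1_harm n a (A : Pt n -> R -> C) t x tb :
  forcing1 a A t x tb =
  (1 + a ^ 2) / a * (harm a 1 (A x tb * phi a true)%C t * harm a 1 (A x tb * phi a true)%C t)
  + 2 * a * (harm a 1 (A x tb * phi a true)%C t * harm a 1 (A x tb * phi a false)%C t).
Proof. by rewrite /forcing1 !psi0_harm; ring. Qed.

Section Solvability.

Variables (n : nat) (a : R) (A : Pt n -> R -> C) (psi1 : R -> Pt n -> R -> R * R).
Variables (x : Pt n) (tb : R).
Hypothesis a_gt0 : 0 < a.
Hypothesis psi1_sol : psi1_solution a A psi1.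

Let w1 := (A x tb * phi a true)%C.
Let w2 := (A x tb * phi a false)%C.
Let y1 t := fst (psi1 t x tb).
Let y2 t := snd (psi1 t x tb).
Let F t := forcing1 a A t x tb.

Let F_continuous t : continuous F t.
Proof.
apply: (continuous_ext (fun t => (1 + a ^ 2) / a * (harm a 1 w1 t * harm a 1 w1 t)
                                + 2 * a * (harm a 1 w1 t * harm a 1 w2 t))).
- by move=> s; rewrite /F forcing1_harm.
- solve_continuous.
Qed.

Let y1_derive t : is_derive y1 t (a ^ 2 * y1 t + a ^ 2 * y2 t + F t).
Proof.
case: psi1_sol => _ /(_ t x tb) [ex1 [_ [E1 _]]].
have -> : a ^ 2 * y1 t + a ^ 2 * y2 t + F t = Derive y1 t by rewrite /y1 /y2 /F; lra.
exact: Derive_correct.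
Qed.

Let y2_derive t : is_derive y2 t (- (1 + a ^ 2) * y1 t - a ^ 2 * y2 t - F t).
Proof.
case: psi1_sol => _ /(_ t x tb) [_ [ex2 [_ E2]]].
have -> : - (1 + a ^ 2) * y1 t - a ^ 2 * y2 t - F t = Derive y2 t by rewrite /y1 /y2 /F; lra.
exact: Derive_correct.
Qed.

Let psi1_periodic : psi1 (2 * PI / a) x tb = psi1 0 x tb.
Proof. by case: psi1_sol => /(_ 0 x tb); rewrite Rplus_0_l. Qed.

Let y1_continuous t : continuous y1 t.
Proof. by apply: ex_derive_continuous; eexists; apply: y1_derive. Qed.
Let y2_continuous t : continuous y2 t.
Proof. by apply: ex_derive_continuous; eexists; apply: y2_derive. Qed.
#[local] Hint Resolve y1_continuous y2_continuous F_continuous : continuity.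

Lemma coef_B2_nonlinear :
  coef a 1 (fun t => B2_nonlinear a (harm a 1 w1 t) (harm a 1 w2 t) (y1 t) (y2 t)) =
  (- (2 * c3 a * A x tb * RtoC (Cmod (A x tb) ^ 2)))%C.
Proof.
have [Y1_mean Y2_mean] := avg_forced_solution a a_gt0 F y1 y2 F_continuous y1_derive y2_derive
                    (f_equal fst psi1_periodic) (f_equal snd psi1_periodic).
have [Y1_mode2 Y2_mode2] := coef2_forced_solution a a_gt0 F y1 y2 F_continuous y1_derive y2_derive
                    (f_equal fst psi1_periodic) (f_equal snd psi1_periodic).
have F_mean : avg a F = (1 + a ^ 2) / a * (2 * fst (w1 * Cconj w1)%C)
                        + 2 * a * (2 * fst (w1 * Cconj w2)%C).
{ rewrite (avg_ext _ _ _ (fun t => forcing1_harm n a A t x tb)).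
  by rewrite avg_plus ?avg_scal ?avg_harm_mul //; try solve_continuous. }
have F_mode2 : coef a 2 F = (RtoC ((1 + a ^ 2) / a) * (w1 * w1) + RtoC (2 * a) * (w1 * w2))%C.
{ rewrite (coef_ext _ _ _ _ (fun t => forcing1_harm n a A t x tb)).
  by rewrite coef_plus ?coef_scal ?coef2_harm_mul //; try solve_continuous. }
rewrite (coef_ext _ _ _ (fun t => 2 * (1 + a ^ 2) / a * (harm a 1 w1 t * y1 t)
                               + 2 * a * (harm a 1 w1 t * y2 t) + 2 * a * (harm a 1 w2 t * y1 t)
                               + 1 * (harm a 1 w1 t * harm a 1 w1 t * harm a 1 w2 t)));
  last by move=> t; rewrite /B2_nonlinear; ring.
rewrite !coef_plus ?coef_scal ?coef_harm_mul ?coef_harm_cube //; try solve_continuous.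
rewrite Y1_mean Y2_mean Y1_mode2 Y2_mode2 F_mean F_mode2 Cmod2_alt /w1 /w2.
case: (A x tb) => u v; cbv [c3 phi Cplus Cmult Cconj Copp RtoC Re Im fst snd].
f_equal; field; lra.
Qed.

Variables (d1 d2 : R) (r mu : R -> R).
Hypothesis A_smooth : smoothC A.

Lemma coef_B2 k :
  coef a 1 (fun t => B2 a d1 d2 r mu A psi1 k t x tb) =
  ((- dtC A x tb - RtoC (/ r tb * Derive r tb) * A x tb
    + RtoC (if k then d1 else d2) * lapC A x tb) * phi a k
   + RtoC (sgn k * (1 + a ^ 2) * mu tb) * A x tb
   - RtoC (sgn k) * (2 * c3 a * A x tb * RtoC (Cmod (A x tb) ^ 2)))%C.
Proof.
have Cn t : continuous (fun t => B2_nonlinear a (harm a 1 w1 t) (harm a 1 w2 t) (y1 t) (y2 t)) t.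
{ by rewrite /B2_nonlinear; solve_continuous. }
rewrite (coef_ext _ _ _ _ (fun t => B2_harm n a d1 d2 r mu A psi1 k t x tb A_smooth)).
by rewrite coef1_harm_add // coef_B2_nonlinear; ring.
Qed.

Lemma solvability_combination :
  (phistar a true * coef a 1 (fun t => B2 a d1 d2 r mu A psi1 true t x tb)
   + phistar a false * coef a 1 (fun t => B2 a d1 d2 r mu A psi1 false t x tb))%C =
  Cminus (Cminus (Cplus (Cmult (Defs.c1 a d1 d2) (lapC A x tb))
                        (Cmult (RtoC (c2 a * mu tb - / r tb * Derive r tb)) (A x tb)))
                 (Cmult (Cmult (c3 a) (A x tb)) (RtoC (Cmod (A x tb) ^ 2))))
         (dtC A x tb).
Proof.
rewrite !coef_B2 Cmod2_alt; set rho := / r tb * Derive r tb.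
case: (A x tb) (dtC A x tb) (lapC A x tb) => u v [ut vt] [lu lv].
cbv [phistar phi sgn Defs.c1 c2 c3 Cplus Cminus Cmult Copp RtoC Re Im fst snd].
f_equal; field; lra.
Qed.

Lemma solvability_iff_GL :
  solvability a d1 d2 r mu A psi1 x tb <->
  GL_eq a d1 d2 (fun s => RtoC (c2 a * mu s - / r s * Derive r s)) A x tb.
Proof. by rewrite /solvability /B21 !fourier1_coef solvability_combination /GL_eq Cminus_eq_0. Qed.

End Solvability.

Lemma solvability_iff_GL_everywhere n a d1 d2 (r mu : R -> R) (A : Pt n -> R -> C) psi1
    (g : R -> C) :
  0 < a -> smoothC A -> psi1_solution a A psi1 ->
  (forall s, g s = RtoC (c2 a * mu s - / r s * Derive r s)) ->
  ((forall x tb, solvability a d1 d2 r mu A psi1 x tb) <-> (forall x tb, GL_eq a d1 d2 g A x tb)).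
Proof.
move=> a_gt0 SA Spsi1 Eg.
have E x tb : GL_eq a d1 d2 g A x tb <->
              GL_eq a d1 d2 (fun s => RtoC (c2 a * mu s - / r s * Derive r s)) A x tb.
{ by rewrite /GL_eq Eg. }
have S x tb := solvability_iff_GL n a A psi1 x tb a_gt0 Spsi1 d1 d2 r mu SA.
by split=> H x tb; [apply/E/S | apply/S/E].
Qed.

Lemma eps1_solution e10 t1 : 2 - 4 * e10 * t1 <> 0 ->
  is_derive (fun s => 2 * e10 / (2 - 4 * e10 * s)) t1 (2 * (2 * e10 / (2 - 4 * e10 * t1)) ^ 2).
Proof. by move=> H; auto_derive; [|field]. Qed.

Lemma eps3_solution e30 t3 : 2 + 4 * e30 * t3 <> 0 ->
  is_derive (fun s => 2 * e30 / (2 + 4 * e30 * s)) t3 (- 2 * (2 * e30 / (2 + 4 * e30 * t3)) ^ 2).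
Proof. by move=> H; auto_derive; [|field]. Qed.

Theorem theorem5p2 :
  forall (a d1 d2 : R) (n : nat), 0 < a -> 0 < d1 -> 0 < d2 -> (1 <= n)%nat ->
  forall (A : Pt n -> R -> C), smoothC A ->
  forall (r mu : R -> R), (forall tb, 0 < r tb) -> (forall tb, ex_derive r tb) ->
  forall (psi1 : R -> Pt n -> R -> R * R), psi1_solution a A psi1 ->
  ((forall x tb, solvability a d1 d2 r mu A psi1 x tb) <->
   (forall x tb, GL_eq a d1 d2 (fun s => RtoC (c2 a * mu s - / r s * Derive r s)) A x tb))
  /\
  (forall eps1 : R -> R,
     (forall tb, mu tb = -1) -> (forall tb, Derive r tb = - / 2 * r tb * eps1 tb) ->
     ((forall x tb, solvability a d1 d2 r mu A psi1 x tb) <->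
      (forall x tb, GL_eq a d1 d2 (fun s => RtoC (- c2 a + eps1 s / 2)) A x tb)))
  /\
  (forall mu20 : R,
     (forall tb, Derive r tb = 0) -> (forall tb, mu tb = mu20 + tb) ->
     ((forall x tb, solvability a d1 d2 r mu A psi1 x tb) <->
      (forall x tb, GL_eq a d1 d2 (fun s => RtoC (c2 a * (mu20 + s))) A x tb)))
  /\
  (forall eps3 : R -> R,
     (forall tb, mu tb = 1) -> (forall tb, Derive r tb = / 2 * r tb * eps3 tb) ->
     ((forall x tb, solvability a d1 d2 r mu A psi1 x tb) <->
      (forall x tb, GL_eq a d1 d2 (fun s => RtoC (c2 a - eps3 s / 2)) A x tb)))
  /\
  (forall e10 t1, 2 - 4 * e10 * t1 <> 0 ->
     is_derive (fun s => 2 * e10 / (2 - 4 * e10 * s)) t1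
               (2 * (2 * e10 / (2 - 4 * e10 * t1)) ^ 2))
  /\
  (forall e30 t3, 2 + 4 * e30 * t3 <> 0 ->
     is_derive (fun s => 2 * e30 / (2 + 4 * e30 * s)) t3
               (- 2 * (2 * e30 / (2 + 4 * e30 * t3)) ^ 2)).
Proof.
move=> a d1 d2 n a_gt0 _ _ _ A SA r mu r_gt0 _ psi1 Spsi1.
have r_neq0 s : r s <> 0 by have := r_gt0 s; lra.
have GL := solvability_iff_GL_everywhere n a d1 d2 r mu A psi1 _ a_gt0 SA Spsi1.
split; first exact: GL.
split; first by move=> eps1 Emu Er; apply: GL => s; rewrite Emu Er; f_equal; field.
split; first by move=> mu20 Er Emu; apply: GL => s; rewrite Emu Er; f_equal; ring.
split; first by move=> eps3 Emu Er; apply: GL => s; rewrite Emu Er; f_equal; field.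
split; [exact: eps1_solution | exact: eps3_solution].
Qed.
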